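(* Suppose $\|\mu_a\|_\infty,\|\widehat\mu_a\|_\infty\le B<\infty$ a.s. for all $a$, and $\mathbb{P}\{\epsilon\le\widehat\pi_a(X)\le1-\epsilon\}=1$ for some $\epsilon>0$ and all $a$. Then $$\sup_{C\in\mathcal{C}_k}\big|\mathbb{P}\{\varphi_C(\widehat\eta)-\varphi_C(\eta)\}\big|\lesssim\max_a\|\widehat\mu_a-\mu_a\|_{\mathbb{P},1}+\max_a\|\widehat\mu_a-\mu_a\|\big(\|\widehat\mu_a-\mu_a\|+\|\widehat\pi_a-\pi_a\|\big).$$
   Context: $Z=(Y,A,X)\sim\mathbb{P}$, $A\in\mathcal{A}=\{1,\dots,p\}$. $\mu_a(X)=\mathbb{E}(Y\mid X,A=a)$, $\pi_a(X)=\mathbb{P}(A=a\mid X)$, $\mu=(\mu_1,\dots,\mu_p)^\top$, $\eta=\{\pi_a,\mu_a\}_a$; $\widehat\eta=\{\widehat\pi_a,\widehat\mu_a\}_a$ estimators held fixed under $\mathbb{P}$. $\varphi_{1,a}(Z;\eta)=\frac{\mathbb{1}(A=a)}{\pi_a(X)}\{Y-\mu_A(X)\}+\mu_a(X)$, $\varphi_{2,a}(Z;\eta)=2\mu_a(X)\frac{\mathbb{1}(A=a)}{\pi_a(X)}\{Y-\mu_A(X)\}+\mu_a^2(X)$, $\varphi_C(Z;\eta)=\sum_a\{\varphi_{2,a}(Z;\eta)-2\varphi_{1,a}(Z;\eta)[\Pi_C(\mu)]_a+[\Pi_C(\mu)]_a^2\}$, where at $\widehat\eta$ all of $\mu,\pi$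 (including inside $\Pi_C$) are replaced by $\widehat\mu,\widehat\pi$. Codebooks $C=\{c_1,\dots,c_k\}\subset\mathbb{R}^p$; $\mathcal{C}_k$ those of size $k$ in the image of $\mu$; $\Pi_C(x)=\arg\min_{c\in C}\|c-x\|_2^2$. $\|\cdot\|$ is the $L_2(\mathbb{P})$ norm, $\|f\|_{\mathbb{P},1}=\int|f|d\mathbb{P}$; $\lesssim$ inequality up to a multiplicative constant. *)

From HB Require Import structures.
From mathcomp Require Import all_boot all_order all_algebra.
From mathcomp Require Import all_classical all_reals all_analysis.
Set Implicit Arguments. Unset Strict Implicit. Unset Printing Implicit Defensive.
Import Order.TTheory GRing.Theory Num.Theory.
Local Open Scope classical_set_scope.
Local Open Scope ring_scope.

Section Defs.
Variables (R : realType) (p : nat) (dX : measure_display) (TX : measurableType dX).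

Definition sqdist (x y : 'I_p -> R) : R := \sum_(a < p) (x a - y a) ^+ 2.

(* Pi_C(x) = argmin_{c in C} ||c - x||^2 ; ties broken by the first index
   (in enumeration order of 'I_k); returns 0 only if C is empty. *)
Definition projC (k : nat) (C : 'I_k -> 'I_p -> R) (x : 'I_p -> R) : 'I_p -> R :=
  match [pick i | [forall j, sqdist x (C i) <= sqdist x (C j)]] with
  | Some i => C i
  | None => fun _ => 0
  end.

(* nuisance eta = (pi, mu), each indexed by a in 'I_p and a function of X *)
Definition phi1 (pi mu : 'I_p -> TX -> R) (a : 'I_p) (y : R) (b : 'I_p) (x : TX) : R :=
  ((b == a)%:R / pi a x) * (y - mu b x) + mu a x.

Definition phi2 (pi mu : 'I_p -> TX -> R) (a : 'I_p) (y : R) (b : 'I_p) (x : TX) : R :=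
  2 * mu a x * ((b == a)%:R / pi a x) * (y - mu b x) + mu a x ^+ 2.

Definition phiC (k : nat) (C : 'I_k -> 'I_p -> R) (pi mu : 'I_p -> TX -> R)
  (y : R) (b : 'I_p) (x : TX) : R :=
  let Pm := projC C (fun a => mu a x) in
  \sum_(a < p) (phi2 pi mu a y b x - 2 * phi1 pi mu a y b x * Pm a + Pm a ^+ 2).

End Defs.

(* mu_a(X) = E(Y | X, A = a): defining property of (a version of) the
   conditional expectation on the event {A = a}. *)
Definition is_outcome_regression {R : realType} {p : nat} {dT dX : measure_display}
  {T : measurableType dT} {TX : measurableType dX} (P : probability T R)
  (Y : T -> R) (A : T -> 'I_p) (X : T -> TX) (mu : 'I_p -> TX -> R) : Prop :=
  forall a, measurable_fun setT (mu a) /\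
    forall S : set TX, measurable S ->
      (\int[P]_t ((Y t * (A t == a)%:R * \1_S (X t))%:E)
       = \int[P]_t ((mu a (X t) * (A t == a)%:R * \1_S (X t))%:E))%E.

(* pi_a(X) = P(A = a | X). *)
Definition is_propensity {R : realType} {p : nat} {dT dX : measure_display}
  {T : measurableType dT} {TX : measurableType dX} (P : probability T R)
  (A : T -> 'I_p) (X : T -> TX) (pi : 'I_p -> TX -> R) : Prop :=
  forall a, measurable_fun setT (pi a) /\
    forall S : set TX, measurable S ->
      (\int[P]_t (((A t == a)%:R * \1_S (X t))%:E)
       = \int[P]_t ((pi a (X t) * \1_S (X t))%:E))%E.

From HB Require Import structures.
From mathcomp Require Import all_boot all_order all_algebra.
From mathcomp Require Import all_classical all_reals all_analysis.
From mathcomp Require Import ring lra.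
Set Implicit Arguments. Unset Strict Implicit. Unset Printing Implicit Defensive.
Import Order.TTheory GRing.Theory Num.Theory.
Import measurable_realfun HBNNSimple.
Local Open Scope classical_set_scope.
Local Open Scope ring_scope.

(* Let [res a = 1(A = a) (Y - mu a (X))]. Expanding [phi1] and [phi2], the
   difference [phiC(etah) - phiC(eta)] is a sum of terms [res a * h a (X)] plus
   a remainder. Since [mu a] is the regression of [Y] on [X] within [A = a],
   [res a] is orthogonal to every integrable function of [X], so the first sum
   has mean zero. The remainder is bounded pointwise by a constant times
   [sum_a |muh a - mu a|(X)], because [1 / pih a <= 1 / eps] and
   [x |-> min_c |x - c|^2] is [4B]-Lipschitz (in [l1]) on the cube of radius
   [B]. So the bias is already bounded by the [L1] term alone. The almost sure
   bounds on [muh] and [pih] become everywhere bounds after clamping, which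
   does not change the integral and can only decrease [|muh a - mu a|]. *)

Section Codebook.
Variables (R : realType) (p k : nat) (C : 'I_k -> 'I_p -> R).
Hypothesis k_gt0 : (0 < k)%N.

Lemma projC_argmin x : exists i, projC C x = C i /\
  forall j, sqdist x (C i) <= sqdist x (C j).
Proof.
rewrite /projC; case: pickP => [i /forallP Hi|Hnone]; first by exists i.
have [i _ Hi] := @arg_minP _ R _ (Ordinal k_gt0) xpredT
  (fun i => sqdist x (C i)) isT.
by have /negP[] := Hnone i; apply/forallP => j; exact: Hi.
Qed.

Variable B : R.

Lemma sqdist_lipschitz (x y c : 'I_p -> R) :
  (forall a, `|x a| <= B) -> (forall a, `|y a| <= B) -> (forall a, `|c a| <= B) ->
  `|sqdist x c - sqdist y c| <= 4 * B * \sum_(a < p) `|x a - y a|.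
Proof.
move=> Bx By Bc; rewrite /sqdist -sumrB mulr_sumr.
apply: (le_trans (ler_norm_sum _ _ _)); apply: ler_sum => a _.
have -> : (x a - c a) ^+ 2 - (y a - c a) ^+ 2
    = (x a - y a) * (x a + y a - 2 * c a) by ring.
rewrite normrM mulrC ler_wpM2r //.
apply: (le_trans (ler_normB _ _)); rewrite normrM ger0_norm //.
apply: (le_trans (lerD (ler_normD _ _) (lexx _))).
by have := Bx a; have := By a; have := Bc a; lra.
Qed.

Hypothesis normC_le : forall i a, `|C i a| <= B.

Lemma norm_projC_le x a : `|projC C x a| <= B.
Proof. by have [i [-> _]] := projC_argmin x. Qed.

(* Each minimum is at most the value at the other minimiser, so the two
   one-sided bounds of [sqdist_lipschitz] suffice. *)
Lemma sqdist_projC_lipschitz (x y : 'I_p -> R) :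
  (forall a, `|x a| <= B) -> (forall a, `|y a| <= B) ->
  `|sqdist x (projC C x) - sqdist y (projC C y)|
    <= 4 * B * \sum_(a < p) `|x a - y a|.
Proof.
move=> Bx By.
have [i [-> min_i]] := projC_argmin x; have [j [-> min_j]] := projC_argmin y.
have := sqdist_lipschitz Bx By (normC_le i).
have := sqdist_lipschitz Bx By (normC_le j).
have := min_i j; have := min_j i.
by rewrite !ler_norml; lra.
Qed.

End Codebook.

Lemma measurable_inv (R : realType) : measurable_fun setT (@GRing.inv R).
Proof.
have m0 : measurable ([set 0] : set R) by [].
rewrite -(setUv [set 0]) setUC; apply/(measurable_funU _ (measurableC m0) m0).
split; last exact: measurable_fun_set1.
apply: open_continuous_measurable_fun.
  exact/closed_openC/accessible_closed_set1/hausdorff_accessible/Rhausdorff.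
by move=> x; rewrite inE /= => /eqP x0; exact: inv_continuous.
Qed.

Lemma measurable_fun_eq_indicator (R : realType) d (T : measurableType d)
    (I : eqType) (A : T -> I) (a : I) :
  measurable (A @^-1` [set a]) ->
  measurable_fun setT (fun t => ((A t == a)%:R : R)).
Proof.
move=> mA; have -> : (fun t => ((A t == a)%:R : R)) = \1_(A @^-1` [set a]).
  by apply/funext => t; rewrite indicE; case: eqP => [<-|Aa];
    [rewrite mem_set|rewrite memNset].
exact: measurable_indic.
Qed.

Section MeasurableProjC.
Context (R : realType) (p k : nat) (C : 'I_k -> 'I_p -> R).
Context d (T : measurableType d) (f : 'I_p -> T -> R).
Hypothesis mf : forall a, measurable_fun setT (f a).

Let ft t := fun a => f a t.
Let is_min t : {ffun 'I_k -> bool} :=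
  [ffun i => [forall j, sqdist (ft t) (C i) <= sqdist (ft t) (C j)]].
Let proj_of (b : {ffun 'I_k -> bool}) : 'I_p -> R :=
  if [pick i | b i] is Some i then C i else fun _ => 0.

Let measurable_is_min i : measurable [set t | is_min t i].
Proof.
have msq j : measurable_fun setT (fun t => sqdist (ft t) (C j)).
  apply: measurable_sum => a; apply: measurable_funX.
  by apply: measurable_funB => //; exact: mf.
have -> : [set t | is_min t i] = \bigcap_(j in [set: 'I_k])
    [set t | sqdist (ft t) (C i) <= sqdist (ft t) (C j)].
  apply/seteqP; split => t /=; rewrite ffunE.
    by move=> /forallP + j _; apply.
  by move=> H; apply/forallP => j; exact: H.
apply: fin_bigcap_measurable => [|j _]; first exact: finite_finset.
have := measurable_fun_ler (msq i) (msq j) measurableT (Y := [set true]) I.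
by rewrite setTI.
Qed.

Let measurable_is_min_eq b : measurable [set t | is_min t = b].
Proof.
have -> : [set t | is_min t = b] = \bigcap_(i in [set: 'I_k])
    (if b i then [set t | is_min t i] else ~` [set t | is_min t i]).
  apply/seteqP; split => t /=.
    by move=> <- i _; case: ifP => // /negbT /negP.
  move=> H; apply/ffunP => i; have := H i I.
  by case: (b i) => /=; case: (is_min t i).
apply: fin_bigcap_measurable => [|i _]; first exact: finite_finset.
by case: ifP => _; [|apply: measurableC]; exact: measurable_is_min.
Qed.

(* [projC C (ft t)] only depends on the finite vector [is_min t], whose level
   sets are measurable, so it is a simple function of [t]. *)
Lemma measurable_projC a :
  measurable_fun setT (fun t => projC C (fun b => f b t) a).
Proof.
have -> : (fun t => projC C (ft t) a) = (fun t =>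
    \sum_(b : {ffun 'I_k -> bool}) proj_of b a * \1_[set t | is_min t = b] t).
  apply/funext => t; have -> : projC C (ft t) = proj_of (is_min t).
    rewrite /projC /proj_of; congr (match _ with Some i => _ | None => _ end).
    by apply: eq_pick => i; rewrite ffunE.
  rewrite (bigD1 (is_min t)) //= indicE mem_set // mulr1.
  rewrite big1 ?addr0 // => b /negbTE Nb.
  by rewrite indicE memNset ?mulr0 //= => /eqP; rewrite eq_sym Nb.
apply: measurable_sum => b; apply: measurable_funM => //.
Qed.

End MeasurableProjC.

Section PhiC.
Context (R : realType) (p k : nat) (C : 'I_k -> 'I_p -> R).
Context dX (TX : measurableType dX).

Lemma phiCE (pi mu : 'I_p -> TX -> R) y b x :
  let r a := mu a x - projC C (fun a => mu a x) a in
  phiC C pi mu y b x =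
    \sum_(a < p) (2 * ((b == a)%:R / pi a x * (y - mu a x)) * r a + r a ^+ 2).
Proof.
rewrite /phiC /phi1 /phi2; apply: eq_bigr => a _.
by have [->|_] := eqVneq b a; [|rewrite !mul0r !mulr0 !mul0r]; ring.
Qed.

Lemma eq_phiC (pi mu pi' mu' : 'I_p -> TX -> R) y b x :
  (forall a, pi a x = pi' a x) -> (forall a, mu a x = mu' a x) ->
  phiC C pi mu y b x = phiC C pi' mu' y b x.
Proof.
move=> epi emu; rewrite /phiC (_ : (fun a => mu a x) = (fun a => mu' a x)).
  by apply: eq_bigr => a _; rewrite /phi1 /phi2 !epi !emu.
by apply/funext => a; exact: emu.
Qed.

Lemma measurable_phiC dT (T : measurableType dT) (Y : T -> R) (A : T -> 'I_p)
    (X : T -> TX) (pi mu : 'I_p -> TX -> R) :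
  measurable_fun setT Y -> measurable_fun setT X ->
  (forall a, measurable (A @^-1` [set a])) ->
  (forall a, measurable_fun setT (pi a)) -> (forall a, measurable_fun setT (mu a)) ->
  measurable_fun setT (fun t => phiC C pi mu (Y t) (A t) (X t)).
Proof.
move=> mY mX mA mpi mmu.
have mmuX a : measurable_fun setT (fun t => mu a (X t)) by exact: measurableT_comp.
have mprj a : measurable_fun setT (fun t => projC C (fun b => mu b (X t)) a).
  exact: (measurable_projC C mmuX).
under eq_fun do rewrite phiCE.
apply: measurable_sum => a; apply: measurable_funD; last first.
  by apply: measurable_funX; exact: measurable_funB.
apply: measurable_funM; last exact: measurable_funB.
apply: measurable_funM => //; apply: measurable_funM; last exact: measurable_funB.
apply: measurable_funM; first exact: measurable_fun_eq_indicator.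
by apply: measurableT_comp; [exact: measurable_inv|exact: measurableT_comp].
Qed.

End PhiC.

(* From indicators to simple functions by linearity, to nonnegative [g] by
   dominated convergence along [nnsfun_approx], and to any [g] via
   [g = g^+ - g^-]. *)
Section Orthogonality.
Context (R : realType) d dX (T : measurableType d) (TX : measurableType dX).
Context (mu : {measure set T -> \bar R}) (X : T -> TX) (Z : T -> R).
Hypotheses (mX : measurable_fun setT X) (mZ : measurable_fun setT Z).
Hypothesis iZ : mu.-integrable setT (EFin \o Z).
Hypothesis Z_orth_indic : forall S, measurable S ->
  (\int[mu]_t ((Z t * \1_S (X t))%:E) = 0)%E.

Let integrable_mul_indic S : measurable S ->
  mu.-integrable setT (fun t => (Z t * \1_S (X t))%:E).
Proof.
move=> mS; apply: le_integrable iZ => //.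
  apply/measurable_EFinP; apply: measurable_funM => //.
  by apply: measurableT_comp => //; exact: measurable_indic.
move=> t _ /=; rewrite lee_fin normrM ler_piMr // indicE.
by case: (_ \in _); rewrite ?normr1 ?normr0.
Qed.

Let Z_orth_nnsfun (h : {nnsfun TX >-> R}) :
  (\int[mu]_t ((Z t * h (X t))%:E) = 0)%E.
Proof.
under eq_integral do rewrite (fimfunEord h) mulr_sumr -sumEFin.
rewrite integral_sum // => [|i].
  apply: big1 => i _; under eq_integral do rewrite mulrCA EFinM.
  rewrite integralZl //; last by apply: integrable_mul_indic; exact: measurable_funPTI.
  by rewrite Z_orth_indic ?mule0 //; exact: measurable_funPTI.
under eq_fun do rewrite mulrCA EFinM.
by apply: integrableZl => //; apply: integrable_mul_indic; exact: measurable_funPTI.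
Qed.

Let Z_orth_ge0 (g : TX -> R) : measurable_fun setT g -> (forall x, 0 <= g x) ->
  mu.-integrable setT (fun t => (Z t * g (X t))%:E) ->
  (\int[mu]_t ((Z t * g (X t))%:E) = 0)%E.
Proof.
move=> mg g0 ig; have mEg : measurable_fun setT (EFin \o g) by exact/measurable_EFinP.
have Eg0 x : setT x -> (0 <= (EFin \o g) x)%E by rewrite lee_fin.
pose gn := nnsfun_approx measurableT mEg.
have mZgn n : measurable_fun setT (fun t => (Z t * gn n (X t))%:E).
  by apply/measurable_EFinP; apply: measurable_funM => //; exact: measurableT_comp.
have cvg_Zgn : {ae mu, forall t, setT t ->
    (fun n => (Z t * gn n (X t))%:E) @ \oo --> (Z t * g (X t))%:E}.
  apply: aeW => t _; rewrite EFinM; under eq_fun do rewrite EFinM.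
  exact/cvgeZl/(cvg_nnsfun_approx measurableT mEg Eg0).
have Zgn_le : {ae mu, forall t n, setT t ->
    (`|(Z t * gn n (X t))%:E| <= `|(Z t * g (X t))%:E|)%E}.
  apply: aeW => t n _; rewrite lee_fin !normrM ler_wpM2l // !ger0_norm //.
  by rewrite -lee_fin /gn nnsfun_approxE; exact: le_approx.
have [_ _ cvg_int] := dominated_convergence measurableT mZgn
  (measurable_int _ ig) cvg_Zgn (integrable_abse ig) Zgn_le.
move: cvg_int; under eq_fun do rewrite Z_orth_nnsfun.
by move/cvg_lim => <- //; exact: lim_cst.
Qed.

Lemma integral_mul_comp_eq0 (g : TX -> R) : measurable_fun setT g ->
  mu.-integrable setT (fun t => (Z t * g (X t))%:E) ->
  (\int[mu]_t ((Z t * g (X t))%:E) = 0)%E.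
Proof.
move=> mg ig.
have gE x : g x = g^\+ x - g^\- x by rewrite -{1}(funrposBneg g) !fctE.
have gpm_le x : `|g^\+ x| <= `|g x| /\ `|g^\- x| <= `|g x|.
  have := congr1 (fun f => f x) (funrposDneg g) => /= <-; rewrite !fctE.
  by split; rewrite ger0_norm ?(lerDl, lerDr, funrpos_ge0, funrneg_ge0).
have iZgpm (h : TX -> R) : measurable_fun setT h -> (forall x, `|h x| <= `|g x|) ->
    mu.-integrable setT (EFin \o (fun t => Z t * h (X t))).
  move=> mh hg; apply: le_integrable ig => //.
    by apply/measurable_EFinP; apply: measurable_funM => //; exact: measurableT_comp.
  by move=> t _ /=; rewrite lee_fin !normrM ler_wpM2l.
have mgp := measurable_funrpos mg; have mgn := measurable_funrneg mg.
have iZgp := iZgpm _ mgp (fun x => (gpm_le x).1).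
have iZgn := iZgpm _ mgn (fun x => (gpm_le x).2).
under eq_integral do rewrite gE mulrBr EFinB.
by rewrite integralB_EFin // !Z_orth_ge0 ?subee // => x;
  rewrite ?funrpos_ge0 ?funrneg_ge0.
Qed.

End Orthogonality.

Section Integrability.
Context (R : realType) d (T : measurableType d) (P : {finite_measure set T -> \bar R}).

Lemma integrable_dominated (f h : T -> R) : P.-integrable setT (EFin \o h) ->
  measurable_fun setT f -> (forall t, `|f t| <= h t) ->
  P.-integrable setT (EFin \o f).
Proof.
move=> ih mf fh; apply: le_integrable ih => //; first exact/measurable_EFinP.
by move=> t _ /=; rewrite lee_fin (le_trans (fh t)) // ler_norm.
Qed.

Lemma integrable_bounded (f : T -> R) (M : R) : measurable_fun setT f ->
  (forall t, `|f t| <= M) -> P.-integrable setT (EFin \o f).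
Proof.
exact/integrable_dominated/finite_measure_integrable_cst.
Qed.

Lemma integrable_normD_cst (f : T -> R) (c : R) : P.-integrable setT (EFin \o f) ->
  P.-integrable setT (EFin \o (fun t => `|f t| + c)).
Proof.
move=> fi; have := integrableD measurableT (integrable_norm fi)
  (finite_measure_integrable_cst P c measurableT).
by apply: eq_integrable => // t _.
Qed.

Lemma integrableZl_EFin (c : R) (f : T -> R) : P.-integrable setT (EFin \o f) ->
  P.-integrable setT (EFin \o (fun t => c * f t)).
Proof.
move=> fi; have := integrableZl measurableT c fi.
by apply: eq_integrable => // t _ /=; rewrite EFinM.
Qed.

End Integrability.

Section BiasBound.
Context (R : realType) (p : nat) (B eps : R).
Hypotheses (eps_gt0 : 0 < eps) (B_ge0 : 0 <= B).
Context (dT dX : measure_display) (T : measurableType dT) (TX : measurableType dX)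
  (P : probability T R) (Y : T -> R) (A : T -> 'I_p) (X : T -> TX)
  (mu pi muh pih : 'I_p -> TX -> R).
Hypotheses (mY : measurable_fun setT Y) (mX : measurable_fun setT X)
  (mA : forall a, measurable (A @^-1` [set a]))
  (mpi : forall a, measurable_fun setT (pi a))
  (mmuh : forall a, measurable_fun setT (muh a))
  (mpih : forall a, measurable_fun setT (pih a))
  (iY : P.-integrable setT (EFin \o Y))
  (mu_reg : is_outcome_regression P Y A X mu)
  (iphi1 : forall a, P.-integrable setT (fun t => (phi1 pi mu a (Y t) (A t) (X t))%:E))
  (mu_le : forall a x, `|mu a x| <= B)
  (muh_le : forall a x, `|muh a x| <= B)
  (pih_ge : forall a x, eps <= pih a x).
Context (k : nat) (C : 'I_k -> 'I_p -> R).
Hypotheses (k_gt0 : (0 < k)%N) (C_mu : forall i, exists x, C i = (fun a => mu a x)).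

Let ind a t : R := (A t == a)%:R.
Let prj x := projC C (fun a => mu a x).
Let prjh x := projC C (fun a => muh a x).
Let wt a x := (mu a x - prj x a) / pi a x.
Let wth a x := (muh a x - prjh x a) / pih a x.
Let res a t := ind a t * (Y t - mu a (X t)).
(* On [A = a] the estimated residual [Y - muh a] is [res a + (mu a - muh a)];
   the first part gives [lin], which is centred given [X], the second goes
   into [rem]. *)
Let lin t := \sum_(a < p) res a t * (2 * (wth a (X t) - wt a (X t))).
Let rem t :=
  \sum_(a < p) 2 * (ind a t * (mu a (X t) - muh a (X t))) * wth a (X t)
  + \sum_(a < p) ((muh a (X t) - prjh (X t) a) ^+ 2 - (mu a (X t) - prj (X t) a) ^+ 2).
Let c0 := 4 * B / eps + 4 * B.

Let c0_ge0 : 0 <= c0.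
Proof. by rewrite addr_ge0 ?mulr_ge0 ?invr_ge0 ?(ltW eps_gt0). Qed.

Let phiC_diffE t :
  phiC C pih muh (Y t) (A t) (X t) - phiC C pi mu (Y t) (A t) (X t) = lin t + rem t.
Proof.
rewrite !phiCE -sumrB /lin /rem -!big_split /=.
by apply: eq_bigr => a _; rewrite /res /ind /wth /wt /prjh /prj; ring.
Qed.

Let mmu a : measurable_fun setT (mu a) := (mu_reg a).1.

Let norm_ind_le a t : `|ind a t| <= 1.
Proof. by rewrite /ind; case: (_ == _); rewrite ?normr1 ?normr0. Qed.

Let normC_le i a : `|C i a| <= B.
Proof. by have [x ->] := C_mu i. Qed.

Let norm_prj_le x a : `|prj x a| <= B.
Proof. exact: norm_projC_le. Qed.

Let norm_prjh_le x a : `|prjh x a| <= B.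
Proof. exact: norm_projC_le. Qed.

Let norm_wth_le a x : `|wth a x| <= 2 * B / eps.
Proof.
have pih_gt0 : 0 < pih a x by exact: lt_le_trans (pih_ge a x).
rewrite /wth normrM normfV (gtr0_norm pih_gt0) ler_pdivrMr // mulrAC ler_pdivlMr //.
rewrite ler_pM ?(ltW eps_gt0) //; apply: (le_trans (ler_normB _ _)).
by have := muh_le a x; have := norm_prjh_le x a; lra.
Qed.

Let mind a : measurable_fun setT (ind a).
Proof. exact: measurable_fun_eq_indicator. Qed.

Let mprj a : measurable_fun setT (fun x => prj x a).
Proof. exact: measurable_projC. Qed.

Let mprjh a : measurable_fun setT (fun x => prjh x a).
Proof. exact: measurable_projC. Qed.

Let mwt a : measurable_fun setT (wt a).
Proof.
apply: measurable_funM; first exact: measurable_funB.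
by apply: measurableT_comp => //; exact: measurable_inv.
Qed.

Let mwth a : measurable_fun setT (wth a).
Proof.
apply: measurable_funM; first exact: measurable_funB.
by apply: measurableT_comp => //; exact: measurable_inv.
Qed.

Let mres a : measurable_fun setT (res a).
Proof. by apply: measurable_funM => //; apply: measurable_funB => //; exact: measurableT_comp. Qed.

Let iYB : P.-integrable setT (EFin \o (fun t => `|Y t| + B)).
Proof. exact: integrable_normD_cst. Qed.

Let norm_res_le a t : `|res a t| <= `|Y t| + B.
Proof.
rewrite /res normrM -[X in _ <= X]mul1r ler_pM //.
by apply: (le_trans (ler_normB _ _)); rewrite lerD2l.
Qed.

Let ires a : P.-integrable setT (EFin \o res a).
Proof. exact: (integrable_dominated iYB). Qed.

Let res_orth_indic a S : measurable S ->
  (\int[P]_t ((res a t * \1_S (X t))%:E) = 0)%E.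
Proof.
move=> mS.
have m1S : measurable_fun setT (fun t => \1_S (X t) : R).
  by apply: measurableT_comp => //; exact: measurable_indic.
have ind1S_le t : `|ind a t * \1_S (X t)| <= 1.
  rewrite normrM indicE -[X in _ <= X]mulr1 ler_pM //.
  by case: (_ \in _); rewrite ?normr1 ?normr0.
have iY1 : P.-integrable setT (EFin \o (fun t => Y t * ind a t * \1_S (X t))).
  apply: (integrable_dominated (integrable_norm iY)) => [|t].
    by apply: measurable_funM => //; exact: measurable_funM.
  by rewrite /= -mulrA normrM ler_piMr.
have imu1 : P.-integrable setT
    (EFin \o (fun t => mu a (X t) * ind a t * \1_S (X t))).
  apply: (integrable_bounded _ (M := B)) => [|t].
    by apply: measurable_funM => //; apply: measurable_funM => //; exact: measurableT_comp.
  by rewrite -mulrA normrM -[X in _ <= X]mulr1 ler_pM.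
under eq_integral do rewrite /res mulrBr mulrBl EFinB (mulrC _ (Y _)) (mulrC _ (mu _ _)).
rewrite integralB_EFin // ((mu_reg a).2 S mS) subee //.
exact: integrable_fin_num.
Qed.

Let rem_le t : `|rem t| <= c0 * \sum_(a < p) `|muh a (X t) - mu a (X t)|.
Proof.
rewrite mulrDl; apply: (le_trans (ler_normD _ _)); apply: lerD.
  rewrite mulr_sumr; apply: (le_trans (ler_norm_sum _ _ _)); apply: ler_sum => a _.
  rewrite !normrM ger0_norm // distrC.
  have -> : 4 * B / eps * `|muh a (X t) - mu a (X t)|
    = 2 * (1 * `|muh a (X t) - mu a (X t)| * (2 * B / eps)) by ring.
  rewrite -mulrA ler_pM2l //; apply: ler_pM => //; first exact: ler_wpM2r.
  by rewrite -normrM; exact: norm_wth_le.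
rewrite sumrB; exact: sqdist_projC_lipschitz.
Qed.

Let mrem : measurable_fun setT rem.
Proof.
have mX' (f : TX -> R) : measurable_fun setT f -> measurable_fun setT (f \o X).
  by move=> mf; exact: measurableT_comp.
apply: measurable_funD; apply: measurable_sum => a.
  apply: measurable_funM; last exact: mX'.
  apply: measurable_funM => //; apply: measurable_funM => //.
  by apply: measurable_funB; exact: mX'.
apply: measurable_funB; apply: measurable_funX; apply: measurable_funB.
- exact: (mX' (muh a)).
- exact: (mX' (fun x => prjh x a)).
- exact: (mX' (mu a)).
- exact: (mX' (fun x => prj x a)).
Qed.

Let irem : P.-integrable setT (EFin \o rem).
Proof.
apply: (integrable_bounded _ (M := c0 * \sum_(a < p) (2 * B))) => // t.
apply: (le_trans (rem_le t)); rewrite ler_wpM2l //; apply: ler_sum => a _.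
apply: (le_trans (ler_normB _ _)).
by have := mu_le a (X t); have := muh_le a (X t); lra.
Qed.

(* [pi] is not bounded away from zero, so the integrability of [res a * wt a]
   comes from that of [phi1]. *)
Let ires_wt a : P.-integrable setT (EFin \o (fun t => res a t * wt a (X t))).
Proof.
have iphi1B := integrable_normD_cst B (iphi1 a).
apply: (integrable_dominated (integrableZl_EFin (2 * B) iphi1B)) => [|t].
  by apply: measurable_funM => //; exact: measurableT_comp.
have -> : res a t * wt a (X t) = (phi1 pi mu a (Y t) (A t) (X t) - mu a (X t))
    * (mu a (X t) - prj (X t) a).
  rewrite /res /wt /phi1 /ind; case: (eqVneq (A t) a) => [->|ne]; first by ring.
  by rewrite !mul0r addrK mul0r.
rewrite normrM mulrC ler_pM //.
  by apply: (le_trans (ler_normB _ _)); have := mu_le a (X t);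
    have := norm_prj_le (X t) a; lra.
by apply: (le_trans (ler_normB _ _)); rewrite lerD2l.
Qed.

Let ires_wth a : P.-integrable setT (EFin \o (fun t => res a t * wth a (X t))).
Proof.
apply: (integrable_dominated (integrableZl_EFin (2 * B / eps) iYB)) => [|t].
  by apply: measurable_funM => //; exact: measurableT_comp.
by rewrite normrM mulrC ler_pM.
Qed.

Let ires_wdiff a :
  P.-integrable setT (fun t => (res a t * (2 * (wth a (X t) - wt a (X t))))%:E).
Proof.
have := integrableB measurableT (integrableZl_EFin 2 (ires_wth a))
  (integrableZl_EFin 2 (ires_wt a)).
by apply: eq_integrable => // t _ /=; rewrite -EFinB; congr EFin; ring.
Qed.

Let ilin : P.-integrable setT (EFin \o lin).
Proof.
have := @integrable_sum _ _ _ P _ measurableT _ (index_enum 'I_p) xpredT _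
  (fun a _ => ires_wdiff a).
by apply: eq_integrable => // t _ /=; rewrite sumEFin.
Qed.

Let integral_lin_eq0 : (\int[P]_t (lin t)%:E = 0)%E.
Proof.
under eq_integral do rewrite /lin -sumEFin.
rewrite integral_sum //.
apply: big1 => a _.
apply: (integral_mul_comp_eq0 mX (mres a) (ires a) (res_orth_indic a)
  (g := fun x => 2 * (wth a x - wt a x))) (ires_wdiff a).
by apply: measurable_funM => //; exact: measurable_funB.
Qed.

Lemma bias_le_sum_L1 :
  (`| \int[P]_t ((phiC C pih muh (Y t) (A t) (X t)
                  - phiC C pi mu (Y t) (A t) (X t))%:E) |
   <= (4 * B / eps + 4 * B)%:E *
      \sum_(a < p) \int[P]_t (`|muh a (X t) - mu a (X t)|%:E))%E.
Proof.
rewrite -/c0.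
have mdist a : measurable_fun setT (fun t => `|muh a (X t) - mu a (X t)|).
  by apply: measurableT_comp => //; apply: measurable_funB; exact: measurableT_comp.
have idist a : P.-integrable setT (EFin \o (fun t => `|muh a (X t) - mu a (X t)|)).
  apply: (integrable_bounded _ (M := 2 * B)) => // t.
  rewrite normr_id; apply: (le_trans (ler_normB _ _)).
  by have := mu_le a (X t); have := muh_le a (X t); lra.
under eq_integral do rewrite phiC_diffE EFinD.
rewrite integralD_EFin // integral_lin_eq0 add0e.
apply: (le_trans (le_abse_integral _ measurableT (measurable_int _ irem))).
have -> : (c0%:E * \sum_(a < p) \int[P]_t (`|muh a (X t) - mu a (X t)|%:E)
    = \int[P]_t ((c0 * \sum_(a < p) `|muh a (X t) - mu a (X t)|)%:E))%E.
  under [in RHS]eq_integral do rewrite EFinM -sumEFin.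
  rewrite integralZl ?integral_sum //.
  by apply: (integrable_sum measurableT) => a _; exact: idist.
apply: ge0_le_integral => //.
- by apply: measurableT_comp => //; exact: measurable_int irem.
- apply/measurable_EFinP; apply: measurable_funM => //.
  by apply: measurable_sum => a; exact: mdist.
- by move=> t _ /=; rewrite lee_fin rem_le.
Qed.

End BiasBound.

Lemma sume_le_bigmax (R : realDomainType) n (f : 'I_n -> \bar R) :
  (\sum_(i < n) f i <= n%:R%:E * \big[maxe/0%E]_(i < n) f i)%E.
Proof.
rewrite mule_natl; set M := \big[maxe/0%E]_(i < n) f i.
have -> : (M *+ n = \sum_(i < n) M)%E by rewrite sumr_const card_ord.
by apply: lee_sum => i _; exact: le_bigmax.
Qed.

Definition clamp (R : realDomainType) (B y : R) := Num.max (- B) (Num.min y B).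

Section Clamp.
Variables (R : realDomainType) (B : R).

Lemma clamp_id y : `|y| <= B -> clamp B y = y.
Proof.
by rewrite ler_norml => /andP[By yB]; rewrite /clamp (min_idPl yB) (max_idPr By).
Qed.

Lemma norm_clamp_le y : 0 <= B -> `|clamp B y| <= B.
Proof.
move=> B_ge0; rewrite ler_norml /clamp le_max lexx /= ge_max ge_min lexx orbT andbT.
by rewrite lerNl (le_trans _ B_ge0) // oppr_le0.
Qed.

Lemma clamp_dist_le y m : `|m| <= B -> `|clamp B y - m| <= `|y - m|.
Proof.
rewrite ler_norml => /andP[Bm mB]; rewrite /clamp.
case: (leP y B) => yB; case: (leP (- B) y) => By //.
- by rewrite !ler0_norm; lra.
- by rewrite (max_idPr (_ : - B <= B)) ?ger0_norm; lra.
- lra.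
Qed.

End Clamp.

Section AeBounds.
Context (R : realType) (p : nat) (B eps : R).
Hypotheses (eps_gt0 : 0 < eps) (B_ge0 : 0 <= B).
Context (dT dX : measure_display) (T : measurableType dT) (TX : measurableType dX)
  (P : probability T R) (Y : T -> R) (A : T -> 'I_p) (X : T -> TX)
  (mu pi muh pih : 'I_p -> TX -> R).
Hypotheses (mY : measurable_fun setT Y) (mX : measurable_fun setT X)
  (mA : forall a, measurable (A @^-1` [set a]))
  (mpi : forall a, measurable_fun setT (pi a))
  (mmuh : forall a, measurable_fun setT (muh a))
  (mpih : forall a, measurable_fun setT (pih a))
  (iY : P.-integrable setT (EFin \o Y))
  (mu_reg : is_outcome_regression P Y A X mu)
  (iphi1 : forall a, P.-integrable setT (fun t => (phi1 pi mu a (Y t) (A t) (X t))%:E))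
  (mu_le : forall a x, `|mu a x| <= B)
  (muh_le : forall a, {ae P, forall t, `|muh a (X t)| <= B})
  (pih_ge : forall a, {ae P, forall t, eps <= pih a (X t)}).
Context (k : nat) (C : 'I_k -> 'I_p -> R).
Hypotheses (k_gt0 : (0 < k)%N) (C_mu : forall i, exists x, C i = (fun a => mu a x)).

Let muc a x := clamp B (muh a x).
Let pic a x := Num.max eps (pih a x).

Let mmu a : measurable_fun setT (mu a) := (mu_reg a).1.

Let mmuc a : measurable_fun setT (muc a).
Proof.
apply: measurable_maxr; first exact: measurable_cst.
by apply: measurable_minr => //; exact: measurable_cst.
Qed.

Let mpic a : measurable_fun setT (pic a).
Proof. by apply: measurable_maxr => //; exact: measurable_cst. Qed.

Let muc_le a x : `|muc a x| <= B.
Proof. exact: norm_clamp_le. Qed.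

Let pic_ge a x : eps <= pic a x.
Proof. by rewrite le_max lexx. Qed.

Let ae_eq_clamped : {ae P, forall t a,
  pih a (X t) = pic a (X t) /\ muh a (X t) = muc a (X t)}.
Proof.
apply: filter_forall => a; apply: filterS2 (muh_le a) (pih_ge a) => t muh_t pih_t.
by rewrite /pic /muc (max_idPr pih_t) clamp_id.
Qed.

Let integral_phiC_clamped :
  (\int[P]_t ((phiC C pih muh (Y t) (A t) (X t) - phiC C pi mu (Y t) (A t) (X t))%:E)
  = \int[P]_t ((phiC C pic muc (Y t) (A t) (X t) - phiC C pi mu (Y t) (A t) (X t))%:E))%E.
Proof.
apply: ae_eq_integral => //.
- by apply/measurable_EFinP; apply: measurable_funB; exact: measurable_phiC.
- by apply/measurable_EFinP; apply: measurable_funB; exact: measurable_phiC.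
- apply: filterS ae_eq_clamped => t eq_t _; congr (EFin (_ - _)).
  by apply: eq_phiC => a; case: (eq_t a).
Qed.

Lemma bias_le_max_L1 :
  (`| \int[P]_t ((phiC C pih muh (Y t) (A t) (X t)
                  - phiC C pi mu (Y t) (A t) (X t))%:E) |
   <= ((4 * B / eps + 4 * B) * p%:R)%:E *
      \big[maxe/0]_(a < p) 'N[P]_(1%:E)[(fun t => (muh a (X t) - mu a (X t))%:E)])%E.
Proof.
rewrite integral_phiC_clamped.
apply: (le_trans (bias_le_sum_L1 eps_gt0 B_ge0 mY mX mA mpi mmuc mpic iY mu_reg
  iphi1 mu_le muc_le pic_ge k_gt0 C_mu)).
rewrite EFinM -muleA; apply: lee_wpmul2l.
  by rewrite lee_fin addr_ge0 ?mulr_ge0 ?invr_ge0 ?(ltW eps_gt0).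
apply: le_trans (sume_le_bigmax _); apply: lee_sum => a _.
rewrite Lnorm1; apply: ge0_le_integral => //.
- apply/measurable_EFinP; apply: measurableT_comp => //.
  by apply: measurable_funB; exact: measurableT_comp.
- apply: measurableT_comp => //; apply/measurable_EFinP.
  by apply: measurable_funB; exact: measurableT_comp.
- by move=> t _; rewrite lee_fin clamp_dist_le.
Qed.

End AeBounds.

Theorem lemmaA8 (R : realType) (p : nat) (B eps : R) :
  0 < eps ->
  exists K : R, forall (dT dX : measure_display)
    (T : measurableType dT) (TX : measurableType dX) (P : probability T R)
    (Y : T -> R) (A : T -> 'I_p) (X : T -> TX)
    (mu pi muh pih : 'I_p -> TX -> R),
    measurable_fun setT Y -> measurable_fun setT X ->
    (forall a, measurable (A @^-1` [set a])) ->
    (forall a, measurable_fun setT (muh a)) ->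
    (forall a, measurable_fun setT (pih a)) ->
    P.-integrable setT (EFin \o Y) ->
    is_outcome_regression P Y A X mu ->
    is_propensity P A X pi ->
    (forall a, P.-integrable setT
       (fun t => (phi1 pi mu a (Y t) (A t) (X t))%:E)) ->
    (forall a x, `|mu a x| <= B) ->
    (forall a, {ae P, forall t, `|muh a (X t)| <= B}) ->
    (forall a, {ae P, forall t, eps <= pih a (X t) <= 1 - eps}) ->
    forall (k : nat) (C : 'I_k -> 'I_p -> R),
      (0 < k)%N -> injective C ->
      (forall i, exists x, C i = (fun a => mu a x)) ->
      (`| \int[P]_t ((phiC C pih muh (Y t) (A t) (X t)
                      - phiC C pi mu (Y t) (A t) (X t))%:E) |
       <= K%:E *
          (\big[maxe/0]_(a < p)
              'N[P]_(1%:E)[(fun t => (muh a (X t) - mu a (X t))%:E)]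
           + \big[maxe/0]_(a < p)
              ('N[P]_(2%:E)[(fun t => (muh a (X t) - mu a (X t))%:E)]
               * ('N[P]_(2%:E)[(fun t => (muh a (X t) - mu a (X t))%:E)]
                  + 'N[P]_(2%:E)[(fun t => (pih a (X t) - pi a (X t))%:E)]))))%E.
Proof.
move=> eps_gt0; exists ((4 * `|B| / eps + 4 * `|B|) * p%:R).
move=> dT dX T TX P Y A X mu pi muh pih mY mX mA mmuh mpih iY mu_reg pi_prop iphi1
  mu_le muh_le pih_ge k C k_gt0 _ C_mu.
have mu_le' a x : `|mu a x| <= `|B| by exact: le_trans (mu_le a x) (ler_norm B).
have muh_le' a : {ae P, forall t, `|muh a (X t)| <= `|B|}.
  by apply: filterS (muh_le a) => t /le_trans; apply; exact: ler_norm.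
have pih_ge' a : {ae P, forall t, eps <= pih a (X t)}.
  by apply: filterS (pih_ge a) => t /andP[].
apply: (le_trans (bias_le_max_L1 eps_gt0 (normr_ge0 B) mY mX mA (fun a => (pi_prop a).1)
  mmuh mpih iY mu_reg iphi1 mu_le' muh_le' pih_ge' k_gt0 C_mu)).
apply: lee_wpmul2l.
  by rewrite lee_fin mulr_ge0 // addr_ge0 ?mulr_ge0 ?invr_ge0 ?(ltW eps_gt0).
by apply: lee_paddr => //; exact: bigmax_ge_id.
Qed.
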